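(* Let $G$ be a graph that has a min-max clique covering with simple intersection, and suppose its compressed cliques graph $\mathcal{C}(G)$ has no induced cycles other than $K_3$ (i.e., no induced cycles of length at least $4$). Then $Z_+(G)=|V(G)|-\operatorname{cc}(G)$.
   Context: A clique covering of a graph is a set of cliques such that every edge lies in at least one of them; $\operatorname{cc}(G)$ is its minimum size. A min-max clique covering is a clique covering of size $\operatorname{cc}(G)$ consisting of maximal cliques; it has simple intersection if no three distinct cliques of it share a vertex. Given such a covering $\{C_1,\dots,C_\ell\}$, put $C_{i,j}=C_i\cap C_j$ ($i\ne j$) and $C_{i,i}=C_i\setminus\bigcup_{j\ne i}C_j$; the compressed cliques graph $\mathcal{C}(G)$ has a vertex $v_{i,j}$ for each non-empty $C_{i,j}$ (including $i=j$), with $v_{i,j}\sim v_{i',j'}$ iff $\{i,j\}\cap\{i',j'\}\ne\emptyset$. $Z_+(G)$ is the positive zero forcing number: the minimum size of a set $B$ of initially black vertices such that repeated application of the rule ''let $W_1,\dots,W_k$ be the vertex sets of components of $G$ minus the black vertices; a black vertex $u$ whose only white neighbour in the subgraph induced by $W_i\cup(\text{black vertices})$ is $w$ may turn $w$ black'' eventually makes all vertices black. *)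

(* A simple graph is a symmetric irreflexive relation e on a finType T. *)
From mathcomp Require Import all_boot all_order all_algebra.
Set Implicit Arguments. Unset Strict Implicit. Unset Printing Implicit Defensive.

Section Defs.
Variable T : finType.
Variable e : rel T.

Definition clique (K : {set T}) : bool :=
  [forall x in K, forall y in K, (x != y) ==> e x y].

Definition maximal_clique (K : {set T}) : bool := maxset clique K.

Definition clique_covering (F : {set {set T}}) : bool :=
  [forall K in F, clique K] &&
  [forall x, forall y, e x y ==> [exists K in F, (x \in K) && (y \in K)]].

(* cc(G): minimum size of a clique covering.  (Every F has #|F| <= #|{set T}|,
   so #|{set T}| is a neutral upper bound for the minimum.) *)
Definition cc : nat :=
  \big[minn/#|{set T}|]_(F : {set {set T}} | clique_covering F) #|F|.

Definition minmax_clique_covering (F : {set {set T}}) : bool :=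
  [&& clique_covering F, #|F| == cc & [forall K in F, maximal_clique K]].

Definition simple_intersection (F : {set {set T}}) : bool :=
  [forall x, #|[set K in F | x \in K]| <= 2].

(* A vertex v_{i,j} is represented by
   the set P = {C_i, C_j} of cliques of F (a singleton when i = j). *)
Definition ccg_part (F : {set {set T}}) (P : {set {set T}}) : {set T} :=
  if #|P| == 1 then (\bigcap_(A in P) A) :\: \bigcup_(B in F :\: P) B
  else \bigcap_(A in P) A.

Definition ccg_vertex (F : {set {set T}}) (P : {set {set T}}) : bool :=
  [&& P \subset F, 0 < #|P| <= 2 & ccg_part F P != set0].

Definition ccg_adj (P Q : {set {set T}}) : bool := (P != Q) && (P :&: Q != set0).

(* adjacency among white (non-black) vertices; its connected components are
   the components W_i of G - B *)
Definition white_rel (B : {set T}) : rel T :=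
  [rel x y | [&& e x y, x \notin B & y \notin B]].

Definition pzf_force (B : {set T}) (u w : T) : bool :=
  [&& u \in B, w \notin B, e u w &
      [forall w', ([&& w' \notin B, e u w' & connect (white_rel B) w w'])
                  ==> (w' == w)]].

Inductive pzf_derives : {set T} -> Prop :=
  | pzf_done B : B = setT -> pzf_derives B
  | pzf_step B u w : pzf_force B u w -> pzf_derives (w |: B) -> pzf_derives B.

Definition pzf_set (B : {set T}) : Prop := pzf_derives B.

Definition Zplus_is (k : int) : Prop :=
  (exists B, pzf_set B /\ (#|B|%:Z = k)%R) /\
  (forall B, pzf_set B -> (k <= #|B|%:Z)%R).
End Defs.

Definition has_induced_long_cycle (V : finType) (vert : pred V) (adj : rel V) : Prop :=
  exists (k : nat) (c : 'I_k -> V),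
    [/\ 4 <= k, injective c, (forall a, vert (c a)) &
        (forall a b : 'I_k, adj (c a) (c b) = (val b == (val a).+1 %% k) || (val a == (val b).+1 %% k))].

From mathcomp Require Import all_boot all_order all_algebra zify.
Set Implicit Arguments. Unset Strict Implicit. Unset Printing Implicit Defensive.

(* Lower bound: a force u -> w blackens the whole clique of F covering the edge uw, so every
   force blackens a new clique and at most #|F| = cc(G) vertices are ever forced.
   Upper bound: a cycle C_1, ..., C_k of cliques of F with consecutive ones meeting gives the
   induced cycle v_{1,2}, ..., v_{k,1} of the compressed cliques graph, so the intersection
   graph of F has no cycle of length at least 4.  Hence F can be listed as K_1, ..., K_m with
   vertices u_i != w_i of K_i such that u_i lies in no later clique and w_i in no earlier one.
   The next clique is a neighbour of those already listed when there is one (the listed cliques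
   of each component stay connected, so it meets at most two of them, and these two meet), and
   otherwise the end of a non-extendable path of unlisted cliques; the vertex of K_i avoiding
   its few neighbours exists because a maximal clique is never covered by two meeting cliques
   of F.  With the w_i white and all other vertices black, u_1, ..., u_m force w_1, ..., w_m. *)

Section CliqueCovers.
Variables (T : finType) (e : rel T).

Lemma cliqueP (K : {set T}) x y : clique e K -> x \in K -> y \in K -> x != y -> e x y.
Proof. by move=> /forall_inP/(_ x) xK_ xK yK; move/forall_inP: (xK_ xK) => /(_ y yK)/implyP. Qed.

Lemma clique_setU1 (K : {set T}) z : symmetric e -> clique e K ->
  {in K, forall x, x != z -> e z x} -> clique e (z |: K).
Proof.
move=> e_sym cK zK; apply/forall_inP => x xzK; apply/forall_inP => y yzK; apply/implyP => xy.
move: xzK yzK xy; rewrite !inE => /predU1P[-> | xK] /predU1P[-> | yK] xy.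
- by rewrite eqxx in xy.
- by apply: zK; rewrite // eq_sym.
- by rewrite e_sym zK.
- exact: cliqueP cK xK yK xy.
Qed.

(* Otherwise [z] would be adjacent to every vertex of [K]. *)
Lemma maximal_clique_not_subsetU (K q1 q2 : {set T}) z : symmetric e ->
  maximal_clique e K -> clique e q1 -> clique e q2 -> z \in q1 -> z \in q2 -> z \notin K ->
  ~~ (K \subset q1 :|: q2).
Proof.
move=> e_sym /maxsetP[cK maxK] cq1 cq2 zq1 zq2 zK; apply/negP => /subsetP Kq.
have czK : clique e (z |: K).
  apply: clique_setU1 => // x xK xz; move: (Kq x xK); rewrite inE.
  by case/orP => xq; [apply: (cliqueP cq1) | apply: (cliqueP cq2)]; rewrite // eq_sym.
by move: zK; rewrite -(maxK _ czK (subsetUr _ _)) setU11.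
Qed.

Lemma cc_le_card F : clique_covering e F -> cc e <= #|F|.
Proof.
move=> covF; rewrite /cc -minEnat.
exact: (Order.TotalTheory.bigmin_le_cond _ (fun F0 : {set {set T}} => #|F0|) covF).
Qed.

Lemma pzf_force_only_white_neighbour (B : {set T}) u w : u \in B -> w \notin B -> e u w ->
  (forall w', w' \notin B -> e u w' -> w' = w) -> pzf_force e B u w.
Proof.
move=> uB wB euw only_w; apply/and4P; split=> //.
by apply/forallP => w'; apply/implyP => /and3P[w'B euw' _]; rewrite (only_w w').
Qed.

Lemma pzf_force_clique (B : {set T}) u w (K : {set T}) :
  pzf_force e B u w -> clique e K -> u \in K -> w \in K -> K \subset w |: B.
Proof.
case/and4P=> uB wB _ /forallP onlyw cK uK wK; apply/subsetP => x xK.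
rewrite !inE; case: eqVneq => [//| xw] /=; apply: contraT => xB.
have eux : e u x by apply: (cliqueP cK) => //; apply: contraNneq xB => <-.
have ewx : e w x by apply: (cliqueP cK); rewrite // eq_sym.
have wx : connect (white_rel e B) w x by apply: connect1; apply/and3P.
by have := implyP (onlyw x); rewrite xB eux wx (negbTE xw); apply.
Qed.

Section Covering.
Variable F : {set {set T}}.
Hypothesis covF : clique_covering e F.

Lemma covering_clique K : K \in F -> clique e K.
Proof. by case/andP: covF => /forall_inP cF _; apply: cF. Qed.

Lemma covering_edge x y : e x y -> exists2 K, K \in F & (x \in K) && (y \in K).
Proof. by case/andP: covF => _ /forallP/(_ x)/forallP/(_ y)/implyP H /H/exists_inP. Qed.

Lemma min_covering_card_gt1 K : irreflexive e -> #|F| = cc e -> K \in F -> 1 < #|K|.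
Proof.
move=> e_irr minF KF; rewrite ltnNge; apply/negP => K_le1.
have covFK : clique_covering e (F :\ K).
  apply/andP; split.
    by apply/forall_inP => K'; rewrite inE => /andP[_ /covering_clique].
  apply/forallP => x; apply/forallP => y; apply/implyP => exy.
  have [K' K'F /andP[xK' yK']] := covering_edge exy.
  apply/exists_inP; exists K'; rewrite ?xK' ?yK' // !inE K'F andbT.
  apply: contraTneq K_le1 => <-; rewrite -ltnNge; apply/card_gt1P; exists x, y.
  by split=> //; apply: contraTneq exy => ->; rewrite e_irr.
by have := cc_le_card covFK; rewrite -minF (cardsD1 K F) KF ltnn.
Qed.

Lemma pzf_derives_card_ge B : pzf_derives e B -> #|T| - #|F| <= #|B|.
Proof.
suff white_le : pzf_derives e B -> #|~: B| <= #|[set K in F | ~~ (K \subset B)]|.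
  move=> /white_le; have := cardsC B.
  have : #|[set K in F | ~~ (K \subset B)]| <= #|F|.
    by apply/subset_leq_card/subsetP => K; rewrite inE => /andP[].
  lia.
elim=> [B' -> | B' u w force _ IH]; first by rewrite setCT cards0.
have /and4P[uB' wB' euw _] := force.
have [K KF /andP[uK wK]] := covering_edge euw.
have notblack_sub : [set K in F | ~~ (K \subset w |: B')] \proper [set K in F | ~~ (K \subset B')].
  apply/properP; split.
    apply/subsetP => K'; rewrite !inE => /andP[-> K'wB]; apply: contra K'wB => K'B.
    exact: subset_trans K'B (subsetUr _ _).
  exists K; rewrite !inE ?KF ?negbK ?(pzf_force_clique force (covering_clique KF)) //=.
  by apply: contra wB' => /subsetP; apply.
rewrite (cardsD1 w) !inE wB' add1n; apply: leq_ltn_trans (proper_card notblack_sub).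
by rewrite setDE setIC -setCU.
Qed.

End Covering.
End CliqueCovers.

Lemma cycle_nth (X : Type) (r : rel X) x0 s i :
  cycle r s -> i < size s -> r (nth x0 s i) (nth x0 s (i.+1 %% size s)).
Proof.
case: s => [//| x p] /=; rewrite -cats1 cat_path /= andbT => /andP[xp lastx].
rewrite ltnS leq_eqVlt => /predU1P[-> | ip]; first by rewrite modnn -last_nth.
by rewrite modn_small ?ltnS //; move/pathP: xp; apply.
Qed.

Lemma exists_maximal_path (X : finType) (r : rel X) (x : X) :
  exists y p, [/\ path r y p, last y p = x, uniq (y :: p) & forall z, r z y -> z \in y :: p].
Proof.
suff ext n y p : #|X| - size p < n -> path r y p -> last y p = x -> uniq (y :: p) ->
    exists y p, [/\ path r y p, last y p = x, uniq (y :: p) & forall z, r z y -> z \in y :: p].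
  by apply: (ext #|X|.+1 x [::]); rewrite ?subn0.
elim: n y p => [// | n IHn] y p size_p yp yx y_uniq.
case: (boolP [exists z, r z y && (z \notin y :: p)]) =>
  [/existsP[z /andP[rzy zyp]] | /existsPn maximal].
  have zyp_uniq : uniq (z :: y :: p) by rewrite /= zyp.
  apply: (IHn z (y :: p)); rewrite /= ?rzy ?yp //.
  have : (size p).+2 <= #|X|.
    by have := max_card (mem (z :: y :: p)); move/card_uniqP: zyp_uniq => ->.
  move: size_p; move: #|X| => c; lia.
exists y, p; split=> // z rzy; apply: contraT => zyp.
by have := maximal z; rewrite rzy zyp.
Qed.

Section CycleEdges.
Variable k : nat.
Hypothesis k_gt2 : 2 < k.

Implicit Types a b : 'I_k.

Lemma val_ordS a : val (ordS a) = if a.+1 == k then 0 else a.+1.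
Proof.
rewrite /=; case: eqP => [-> | ak]; first exact: modnn.
by rewrite modn_small //; have := ltn_ord a; lia.
Qed.

Lemma ordS_neq a : ordS a != a.
Proof. by apply/eqP => /(congr1 val); rewrite val_ordS; case: eqP => /=; lia. Qed.

Lemma ordS2_neq a : ordS (ordS a) != a.
Proof.
apply/eqP => /(congr1 val); rewrite !val_ordS; have := ltn_ord a.
by case: (a.+1 =P k) => ?; case: eqP => ? /=; lia.
Qed.

Definition cycle_edge a : {set 'I_k} := [set a; ordS a].

Lemma card_cycle_edge a : #|cycle_edge a| = 2.
Proof. by rewrite cards2 eq_sym ordS_neq. Qed.

Lemma cycle_edge_meet a b :
  (cycle_edge a :&: cycle_edge b != set0) = [|| a == b, b == ordS a | a == ordS b].
Proof.
apply/set0Pn/idP => [[x] | /or3P[] /eqP ->].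
- rewrite !inE => /andP[] /orP[] /eqP -> /orP[] /eqP.
  + by move=> ->; rewrite eqxx.
  + by move=> ->; rewrite eqxx !orbT.
  + by move=> <-; rewrite eqxx orbT.
  + by move/ordS_inj => ->; rewrite eqxx.
- by exists b; rewrite !inE eqxx.
- by exists (ordS a); rewrite !inE eqxx !orbT.
- by exists (ordS b); rewrite !inE eqxx !orbT.
Qed.

Lemma cycle_edge_inj : injective cycle_edge.
Proof.
move=> a b eq_ab; have : a \in cycle_edge b by rewrite -eq_ab setU11.
have : ordS a \in cycle_edge b by rewrite -eq_ab !inE eqxx orbT.
rewrite !inE => /orP[] /eqP Sa /orP[] /eqP a_ //.
- by move: (ordS2_neq b); rewrite -a_ Sa eqxx.
- by apply: ordS_inj.
Qed.

End CycleEdges.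

Definition meets {T : finType} : rel {set T} := fun A B => A :&: B != set0.

Section IntersectionGraph.
Variable T : finType.
Implicit Types (A B : {set T}) (S : {set {set T}}).

Definition adjacent (A B : {set T}) := (A != B) && meets A B.

Definition adjacent_in (S : {set {set T}}) : rel {set T} :=
  fun A B => [&& A \in S, B \in S & adjacent A B].

Lemma adjacent_in_sym S : symmetric (adjacent_in S).
Proof. by move=> A B; rewrite /adjacent_in /adjacent /meets eq_sym setIC andbCA. Qed.

Lemma connect_adjacent_in_sym S : connect_sym (adjacent_in S).
Proof. exact/sym_connect_sym/adjacent_in_sym. Qed.

Lemma connect_adjacent_in_setU1 S K A B :
  connect (adjacent_in S) A B -> connect (adjacent_in (K |: S)) A B.
Proof.
apply: connect_sub => C D /and3P[CS DS CD]; apply: connect1.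
by rewrite /adjacent_in !inE CS DS CD !orbT.
Qed.

Lemma adjacent_in_meets S : subrel (adjacent_in S) meets.
Proof. by move=> A B /and3P[_ _ /andP[]]. Qed.

Lemma adjacent_in_path_sub S A s : path (adjacent_in S) A s -> {subset s <= S}.
Proof.
elim: s A => [// | B s IHs] A /= /andP[/and3P[_ BS _] /IHs sS] C.
by rewrite inE => /predU1P[-> | /sS].
Qed.

Lemma take2_path_meets S y t : path (adjacent_in S) y t ->
  {in take 2 t &, forall q1 q2, q1 != q2 -> meets q1 q2}.
Proof.
case: t => [// | A [| B t]] /=.
  by move=> _ q1 q2; rewrite !inE => /eqP -> /eqP ->; rewrite eqxx.
case/and3P=> _ /adjacent_in_meets AB _ q1 q2.
rewrite take0 !inE => /orP[] /eqP -> /orP[] /eqP -> //; rewrite ?eqxx // => _.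
by rewrite /meets setIC.
Qed.

End IntersectionGraph.

Section CompressedCliquesGraph.
Variables (T : finType) (F : {set {set T}}).

(* The vertices [v_{i,i+1}] of a cycle of cliques induce a cycle of the compressed cliques graph,
   whatever chords the cycle of cliques has. *)
Lemma clique_cycle_ccg_induced (cs : seq {set T}) :
  uniq cs -> {subset cs <= F} -> 3 < size cs -> cycle meets cs ->
  has_induced_long_cycle (ccg_vertex F) (@ccg_adj T).
Proof.
move=> cs_uniq csF cs_long cs_cycle; set k := size cs in cs_long cs_cycle.
have k_gt2 : 2 < k by apply: ltnW.
pose X (a : 'I_k) := nth set0 cs a.
have X_inj : injective X.
  by move=> a b /eqP; rewrite nth_uniq // => /eqP /val_inj.
pose c a := X @: cycle_edge a.
have c_inj : injective c by move=> a b /(imset_inj X_inj) /(cycle_edge_inj k_gt2).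
exists k, c; split => //.
- move=> a; have card_c : #|c a| = 2 by rewrite card_imset // (card_cycle_edge k_gt2).
  rewrite /ccg_vertex /ccg_part card_c /=; apply/andP; split.
    by apply/subsetP => _ /imsetP[i _ ->]; apply/csF/mem_nth.
  have /set0Pn[z] := cycle_nth set0 cs_cycle (ltn_ord a); rewrite inE => /andP[za zSa].
  apply/set0Pn; exists z; apply/bigcapP => Y /imsetP[i].
  by rewrite !inE => /orP[] /eqP -> ->.
- move=> a b; rewrite /ccg_adj (inj_eq c_inj) -imsetI; last by move=> ? ? _ _; apply: X_inj.
  rewrite imset_eq0 cycle_edge_meet.
  change ((a != b) && [|| a == b, b == ordS a | a == ordS b] = (b == ordS a) || (a == ordS b)).
  by case: eqVneq => [-> | //] /=; rewrite eq_sym (negbTE (ordS_neq k_gt2 _)).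
Qed.

End CompressedCliquesGraph.

Section MinMaxCovering.
Variables (T : finType) (e : rel T).
Hypotheses (e_sym : symmetric e) (e_irr : irreflexive e).
Variable F : {set {set T}}.
Hypotheses (F_minmax : minmax_clique_covering e F) (F_simple : simple_intersection F).
Hypothesis F_no_long_cycle : ~ has_induced_long_cycle (ccg_vertex F) (@ccg_adj T).
Implicit Types (K p q : {set T}) (N P : {set {set T}}).

Lemma F_covering : clique_covering e F.
Proof. by case/and3P: F_minmax. Qed.

Lemma card_F : #|F| = cc e.
Proof. by case/and3P: F_minmax => _ /eqP. Qed.

Lemma F_maximal K : K \in F -> maximal_clique e K.
Proof. by case/and3P: F_minmax => _ _ /forall_inP; apply. Qed.

Lemma F_card_gt1 K : K \in F -> 1 < #|K|.
Proof. exact: min_covering_card_gt1 F_covering K e_irr card_F. Qed.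

Lemma F_no_triple_point K1 K2 K3 x : K1 \in F -> K2 \in F -> K3 \in F ->
  K1 != K2 -> K2 != K3 -> K3 != K1 -> x \in K1 -> x \in K2 -> x \in K3 -> False.
Proof.
move=> K1F K2F K3F K12 K23 K31 xK1 xK2 xK3.
have := forallP F_simple x; rewrite leqNgt => /negP; apply; apply/card_gt2P.
by exists K1, K2, K3; rewrite !inE K1F K2F K3F xK1 xK2 xK3.
Qed.

Lemma closing_path_short K A s : K \in F -> {subset A :: s <= F} -> uniq (K :: A :: s) ->
  meets K A -> path meets A s -> meets (last A s) K -> size s <= 1.
Proof.
move=> KF AsF KAs_uniq KA As lastK; rewrite leqNgt; apply/negP => s_long.
apply: F_no_long_cycle; apply: (clique_cycle_ccg_induced (cs := K :: A :: s)) => //.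
- by move=> B; rewrite inE => /predU1P[-> | /AsF].
- by rewrite /= rcons_path KA As.
Qed.

(* A vertex common to the (at most two) cliques of [N] lies outside [K] by simple intersection,
   and it would extend [K] if [N] covered [K]. *)
Lemma exists_vertex_off K N : K \in F -> N \subset F :\ K -> #|N| <= 2 ->
  {in N &, forall q1 q2, q1 != q2 -> meets q1 q2} ->
  exists2 w, w \in K & {in N, forall q, w \notin q}.
Proof.
move=> KF /subsetP NFK N_le2 N_meet.
have NF q : q \in N -> q \in F by move/NFK; rewrite !inE => /andP[_ ->].
have NK q : q \in N -> q != K by move/NFK; rewrite !inE => /andP[->].
suff /exists_inP[w wK /forall_inP wN] : [exists w in K, [forall q in N, w \notin q]] by exists w.
apply: contraT; rewrite negb_exists_in => /forall_inP Kcov.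
have cov x : x \in K -> exists2 q, q \in N & x \in q.
  by move/Kcov; rewrite negb_forall_in => /exists_inP[q qN]; rewrite negbK; exists q.
have [y0 y0K] : exists y0, y0 \in K by apply/card_gt0P; apply: ltnW (F_card_gt1 KF).
have [q1 q1N y0q1] := cov y0 y0K.
have /subsetPn[y1 y1K y1q1] : ~~ (K \subset q1).
  apply: contra (NK q1 q1N) => Kq1; apply/eqP.
  by case/maxsetP: (F_maximal KF) => _; apply; rewrite ?(covering_clique F_covering) ?NF.
have [q2 q2N y1q2] := cov y1 y1K.
have q12 : q1 != q2 by apply: contraNneq y1q1 => ->.
have /set0Pn[z] := N_meet q1 q2 q1N q2N q12; rewrite inE => /andP[zq1 zq2].
have zK : z \notin K.
  apply/negP => zK; apply: (F_no_triple_point (NF q1 q1N) (NF q2 q2N) KF q12 (NK q2 q2N)) zK => //.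
  by rewrite eq_sym NK.
have N12 q : q \in N -> (q == q1) || (q == q2).
  move=> qN; apply: contraLR N_le2; rewrite negb_or -ltnNge => /andP[qq1 qq2].
  apply/card_gt2P.
  by exists q1, q2, q; rewrite q1N q2N qN q12 eq_sym qq2 qq1.
have cN q : q \in N -> clique e q by move/NF/(covering_clique F_covering).
have := maximal_clique_not_subsetU e_sym (F_maximal KF) (cN q1 q1N) (cN q2 q2N) zq1 zq2 zK.
suff -> : K \subset q1 :|: q2 by [].
apply/subsetP => x /cov[q qN xq]; rewrite inE.
by case/orP: (N12 q qN) => /eqP <-; rewrite xq ?orbT.
Qed.

Definition reflects_connect P := P \subset F /\
  {in P &, forall p q, connect (adjacent_in F) p q -> connect (adjacent_in P) p q}.

Lemma reflects_connect0 : reflects_connect set0.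
Proof. by split=> [|p q]; rewrite ?sub0set ?inE. Qed.

Lemma reflects_connect_setU1_adjacent P K p0 : reflects_connect P -> K \in F ->
  p0 \in P -> adjacent K p0 -> reflects_connect (K |: P).
Proof.
move=> [/subsetP PF P_conn] KF p0P Kp0; split.
  by apply/subsetP => A; rewrite !inE => /predU1P[-> | /PF].
have K_to q : q \in P -> connect (adjacent_in F) K q -> connect (adjacent_in (K |: P)) K q.
  move=> qP Kq; apply: (connect_trans (y := p0)).
    by apply: connect1; rewrite /adjacent_in setU11 !inE p0P orbT.
  apply/connect_adjacent_in_setU1/P_conn => //; apply: connect_trans Kq.
  by apply: connect1; rewrite adjacent_in_sym /adjacent_in KF PF.
move=> p q; rewrite !inE => /predU1P[-> | pP] /predU1P[-> | qP] pq.
- exact: connect0.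
- exact: K_to.
- by rewrite connect_adjacent_in_sym; apply: K_to; rewrite // connect_adjacent_in_sym.
- exact/connect_adjacent_in_setU1/P_conn.
Qed.

Lemma reflects_connect_setU1_closed P K :
  reflects_connect P -> closed (adjacent_in F) P -> K \in F -> reflects_connect (K |: P).
Proof.
move=> P_refl P_closed KF; have [KP | KnP] := boolP (K \in P).
  by have -> : K |: P = P by apply/setUidPr; rewrite sub1set.
case: P_refl => /subsetP PF P_conn; split.
  by apply/subsetP => A; rewrite !inE => /predU1P[-> | /PF].
have K_P q : q \in P -> ~~ connect (adjacent_in F) K q.
  by move=> qP; apply: contra KnP => /(closed_connect P_closed) ->.
move=> p q; rewrite !inE => /predU1P[-> | pP] /predU1P[-> | qP] pq.
- exact: connect0.
- by move: (K_P q qP); rewrite pq.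
- by move: (K_P p pP); rewrite connect_adjacent_in_sym pq.
- exact/connect_adjacent_in_setU1/P_conn.
Qed.

Definition forcing_step P K u w := [/\ K \in F :\: P, u \in K :\ w, w \in K,
  {in P, forall p, w \notin p} & {in F, forall K', u \in K' -> K' \in K |: P}].

Lemma neighbours_meet P K q1 q2 : reflects_connect P -> K \in F :\: P -> q1 \in P -> q2 \in P ->
  adjacent K q1 -> adjacent K q2 -> q1 != q2 -> meets q1 q2.
Proof.
move=> [/subsetP PF P_conn] /setDP[KF KnP] q1P q2P Kq1 Kq2 q12.
have : connect (adjacent_in F) q1 q2.
  apply: (connect_trans (y := K)); apply: connect1; last by rewrite /adjacent_in KF PF.
  by rewrite adjacent_in_sym /adjacent_in KF PF.
case/(P_conn _ _ q1P q2P)/connectP => s s_path s_last; move: s_last.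
case/shortenP: s_path => s' s'_path s'_uniq _ q2_last.
have s'P := adjacent_in_path_sub s'_path.
have : size s' <= 1.
  apply: (closing_path_short KF) (sub_path (@adjacent_in_meets _ P) s'_path) _.
  - by move=> A; rewrite inE => /predU1P[-> | /s'P]; apply: PF.
  - rewrite cons_uniq s'_uniq andbT inE negb_or; apply/andP; split.
      by apply: contraNneq KnP => ->.
    by apply: contra KnP => /s'P.
  - by case/andP: Kq1.
  - by rewrite -q2_last /meets setIC; case/andP: Kq2.
case: s' {s'_uniq s'P} s'_path q2_last => [_ /= q21 | B [|//]]; first by rewrite q21 eqxx in q12.
by rewrite /= andbT => /adjacent_in_meets + ->.
Qed.

Lemma card_neighbours_le2 P K : reflects_connect P -> K \in F :\: P ->
  #|[set q in P | adjacent K q]| <= 2.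
Proof.
move=> P_refl KFP; have /setDP[KF KnP] := KFP; have [/subsetP PF _] := P_refl.
rewrite leqNgt; apply/negP; case/card_gt2P => q1 [q2 [q3 [[+ + +] [q12 q23 q31]]]].
rewrite !inE => /andP[q1P Kq1] /andP[q2P Kq2] /andP[q3P Kq3].
have meet := neighbours_meet P_refl KFP.
have KnPq q : q \in P -> K != q by move=> qP; apply: contraNneq KnP => ->.
suff : size [:: q3; q2] <= 1 by [].
apply: (closing_path_short (A := q1) KF).
- by move=> A; rewrite !inE => /or3P[] /eqP ->; apply: PF.
- by rewrite /= !inE !negb_or !KnPq // q12 eq_sym q31 eq_sym q23.
- by case/andP: Kq1.
- by rewrite /= (meet q1 q3) ?(meet q3 q2) // eq_sym.
- by rewrite /meets setIC; case/andP: Kq2.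
Qed.

Lemma forcing_step_adjacent P K p0 : reflects_connect P -> K \in F :\: P -> p0 \in P ->
  adjacent K p0 -> exists u w, forcing_step P K u w.
Proof.
move=> P_refl KFP p0P Kp0; have /setDP[KF KnP] := KFP; have [/subsetP PF _] := P_refl.
set N := [set q in P | adjacent K q].
have [w wK wN] : exists2 w, w \in K & {in N, forall q, w \notin q}.
  apply: exists_vertex_off KF _ (card_neighbours_le2 P_refl KFP) _.
    apply/subsetP => q; rewrite !inE => /andP[qP _]; rewrite PF // andbT.
    by apply: contraNneq KnP => <-.
  move=> q1 q2; rewrite !inE => /andP[q1P Kq1] /andP[q2P Kq2].
  exact: neighbours_meet P_refl KFP q1P q2P Kq1 Kq2.
have wP : {in P, forall p, w \notin p}.
  move=> p pP; apply/negP => wp.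
  suff pN : p \in N by move: (wN p pN); rewrite wp.
  rewrite inE pP /adjacent (contraNneq _ KnP) => [|-> //].
  by apply/set0Pn; exists w; rewrite inE wK.
case/andP: Kp0 => Kp0 /set0Pn[u]; rewrite inE => /andP[uK up0].
exists u, w; split=> //.
- by rewrite !inE uK andbT; apply: contraTneq up0 => ->; apply: wP.
move=> K' K'F uK'; rewrite !inE; case: (eqVneq K' K) => //= K'K.
case: (eqVneq K' p0) => [-> // | K'p0]; exfalso.
by apply: (F_no_triple_point KF (PF p0 p0P) K'F Kp0 _ K'K uK up0 uK'); rewrite eq_sym.
Qed.

(* Otherwise the path closes a cycle of at least four cliques. *)
Lemma meets_path_head (R : {set {set T}}) y t q :
  R \subset F -> path (adjacent_in R) y t -> uniq (y :: t) ->
  q \in t -> meets y q -> q \in take 2 t.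
Proof.
move=> /subsetP RF; case: t => [// | A t] yAt yAt_uniq; have /andP[yA At] := yAt.
rewrite inE => /predU1P[-> _ | qt yq]; first exact: mem_head.
rewrite /= inE; apply/orP; right.
have tR := adjacent_in_path_sub At; set j := index q t.
have jt : j < size t by rewrite index_mem.
have : size (take j.+1 t) <= 1.
  apply: (closing_path_short (A := A) (RF y _)).
  - by case/and3P: yA.
  - move=> B; rewrite inE => /predU1P[-> | /mem_take /tR /RF //].
    by apply: RF; case/and3P: yA.
  - exact: (take_uniq j.+3 yAt_uniq).
  - exact: adjacent_in_meets yA.
  - exact/(sub_path (@adjacent_in_meets _ R))/take_path.
  - by rewrite (last_nth set0) size_takel // /= nth_take // nth_index // /meets setIC.
rewrite size_takel // ltnS leqn0 => /eqP j0.
by rewrite -(nth_index set0 qt) -/j j0; case: (t) jt => // B t0 _; exact: mem_head.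
Qed.

Lemma maximal_path_neighbours P y t : closed (adjacent_in F) P -> y \in F :\: P ->
  path (adjacent_in (F :\: P)) y t -> uniq (y :: t) ->
  (forall z, adjacent_in (F :\: P) z y -> z \in y :: t) ->
  {in F, forall q, adjacent y q -> q \in take 2 t}.
Proof.
move=> P_closed yR yt yt_uniq y_max q qF yq; have /andP[yq_neq yq_meet] := yq.
suff qt : q \in t by exact: meets_path_head (subsetDl F P) yt yt_uniq qt yq_meet.
have qR : q \in F :\: P.
  have /setDP[yF ynP] := yR.
  by rewrite inE qF andbT -(P_closed y q) // /adjacent_in yF qF.
have : q \in y :: t.
  by apply: y_max; rewrite /adjacent_in qR yR /adjacent eq_sym yq_neq /meets setIC.
by rewrite inE eq_sym (negbTE yq_neq).
Qed.

Lemma forcing_step_closed P : reflects_connect P -> closed (adjacent_in F) P ->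
  F :\: P != set0 -> exists K u w, forcing_step P K u w /\ reflects_connect (K |: P).
Proof.
move=> P_refl P_closed /set0Pn[y0 y0R].
have [y [t [yt t_last yt_uniq y_max]]] := exists_maximal_path (adjacent_in (F :\: P)) y0.
have yR : y \in F :\: P.
  by case: t yt t_last {yt_uniq y_max} => [/= _ -> // | A t /= /andP[/and3P[]]].
have /setDP[yF ynP] := yR.
have N_t := maximal_path_neighbours P_closed yR yt yt_uniq y_max.
set N := [set q in F | adjacent y q].
have [u uy uN] : exists2 u, u \in y & {in N, forall q, u \notin q}.
  apply: exists_vertex_off yF _ _ _.
  - by apply/subsetP => q; rewrite !inE => /andP[-> /andP[yq _]]; rewrite eq_sym yq.
  - apply: (@leq_trans #|take 2 t|).
      by apply/subset_leq_card/subsetP => q; rewrite inE => /andP[]; apply: N_t.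
    by apply: leq_trans (card_size _) _; rewrite size_take_min geq_minl.
  - move=> q1 q2; rewrite !inE => /andP[q1F /(N_t _ q1F) q1t] /andP[q2F /(N_t _ q2F) q2t].
    exact: take2_path_meets yt _ _ q1t q2t.
have := F_card_gt1 yF; rewrite (cardsD1 u) uy add1n ltnS card_gt0.
case/set0Pn => w; rewrite !inE => /andP[wu wy].
exists y, u, w; split; last exact: reflects_connect_setU1_closed.
split=> //; first by rewrite !inE eq_sym wu uy.
- move=> p pP; apply/negP => wp.
  have pF : p \in F by case: P_refl => /subsetP ->.
  have yp : adjacent_in F y p.
    rewrite /adjacent_in yF pF /adjacent (contraNneq _ ynP) => [|-> //].
    by apply/set0Pn; exists w; rewrite inE wy.
  by move: ynP; rewrite (P_closed y p yp) pP.
- move=> K' K'F uK'; rewrite !inE; case: (eqVneq K' y) => //= K'y.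
  suff K'N : K' \in N by move: (uN K' K'N); rewrite uK'.
  by rewrite inE K'F /adjacent eq_sym K'y; apply/set0Pn; exists u; rewrite inE uy.
Qed.

Lemma exists_forcing_step P : reflects_connect P -> F :\: P != set0 ->
  exists K u w, forcing_step P K u w /\ reflects_connect (K |: P).
Proof.
move=> P_refl FnP.
have [/existsP[K /existsP[p0 /and3P[KFP p0P Kp0]]] | no_edge] :=
  boolP [exists K, exists p, [&& K \in F :\: P, p \in P & adjacent K p]].
  have [u [w step]] := forcing_step_adjacent P_refl KFP p0P Kp0.
  exists K, u, w; split=> //; apply: reflects_connect_setU1_adjacent p0P Kp0 => //.
  by case/setDP: KFP.
apply: forcing_step_closed => //; apply: intro_closed; first exact: connect_adjacent_in_sym.
move=> A B /and3P[AF BF AB] AP; apply: contraNT no_edge => BnP.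
apply/existsP; exists B; apply/existsP; exists A.
by rewrite inE BnP BF AP /adjacent eq_sym /meets setIC.
Qed.

Lemma forcing_sequence P : reflects_connect P -> exists W : {set T},
  [/\ #|W| = #|F :\: P|, {in P, forall p, [disjoint W & p]} & pzf_derives e (~: W)].
Proof.
move: {2}#|F :\: P| (erefl #|F :\: P|) => n; elim: n P => [|n IHn] P FnP P_refl.
  exists set0; split; first by rewrite cards0.
    by move=> p _; rewrite -setI_eq0 set0I.
  by constructor; rewrite setC0.
have FnP0 : F :\: P != set0 by rewrite -card_gt0 FnP.
have [K [u [w [[KFP uKw wK wP uP] KP_refl]]]] := exists_forcing_step P_refl FnP0.
have FnKP : #|F :\: (K |: P)| = n.
  by move: FnP; rewrite (cardsD1 K) KFP setDDl setUC add1n => -[].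
have [W [cardW W_off dW]] := IHn (K |: P) FnKP KP_refl.
have W_offK := W_off K (setU11 K P).
have wW : w \notin W by rewrite (disjointFl W_offK wK).
have /setD1P[uw uK] := uKw.
exists (w |: W); split.
- by rewrite cardsU1 wW cardW FnKP FnP.
- move=> p pP; rewrite -setI_eq0 setIUl setU_eq0 !setI_eq0 disjoints1 wP //.
  by apply: W_off; rewrite !inE pP orbT.
apply: (pzf_step (u := u) (w := w)); last first.
  by rewrite (_ : w |: _ = ~: W) //; apply/setP => x; rewrite !inE; case: eqVneq => [->|].
apply: pzf_force_only_white_neighbour.
- by rewrite !inE negb_or uw (disjointFl W_offK uK).
- by rewrite !inE eqxx.
- exact: (cliqueP (covering_clique F_covering (setDP KFP).1)).
move=> w'; rewrite !inE negbK => /predU1P[-> // | w'W] euw'.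
have [K' K'F /andP[uK' w'K']] := covering_edge F_covering euw'.
by move: (disjointFl (W_off K' (uP K' K'F uK')) w'K'); rewrite w'W.
Qed.

Lemma exists_pzf_set_card : exists2 B, pzf_set e B & #|B| + cc e = #|T|.
Proof.
have [W [cardW _ dW]] := forcing_sequence reflects_connect0.
by exists (~: W) => //; rewrite -card_F -(setD0 F) -cardW addnC cardsC.
Qed.

End MinMaxCovering.

Theorem mainTheorem7 (T : finType) (e : rel T)
  (e_sym : symmetric e) (e_irr : irreflexive e)
  (F : {set {set T}})
  (HF : minmax_clique_covering e F)
  (Hsimple : simple_intersection F)
  (Hcyc : ~ has_induced_long_cycle (ccg_vertex F) (@ccg_adj T)) :
  Zplus_is e (#|T|%:Z - (cc e)%:Z)%R.
Proof.
have [B B_pzf cardB] := exists_pzf_set_card e_sym e_irr HF Hsimple Hcyc.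
split=> [|B' /(pzf_derives_card_ge (F_covering HF))]; last first.
  by rewrite (card_F HF); lia.
by exists B; split=> //; lia.
Qed.
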